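(* Let $m\ge 1$ and $s\in\{-,+\}$, and let $s'$ denote the opposite sign. For every polynomial $\hat\phi^s\in\mathbb{P}_m$, considered on $\hat K_F^s$, there exists a unique polynomial $\hat\phi^{s'}\in\mathbb{P}_m$, considered on $\hat K_F^{s'}$, such that the piecewise function $$\hat\phi(\eta,\xi)=\begin{cases}\hat\phi^-(\eta,\xi),&(\eta,\xi)\in\hat K_F^-,\\ \hat\phi^+(\eta,\xi),&(\eta,\xi)\in\hat K_F^+\end{cases}$$ satisfies the interface conditions (C1), (C2) and (C3).
   Context: Frenet coordinates $(\eta,\xi)$; $\mathbb{P}_m$ denotes bivariate polynomials of total degree at most $m$. The set $\hat K_F$ is a bounded region of the $(\eta,\xi)$-plane that is cut by the line $\eta=0$ into $\hat K_F^-=\hat K_F\cap\{\eta<0\}$ and $\hat K_F^+=\hat K_F\cap\{\eta>0\}$. The interface segment is $\hat\Gamma_{K_F}=\{(0,\xi):\xi_0\le\xi\le\xi_1\}\subset\overline{\hat K_F}$ with $\xi_0<\xi_1$. The coefficient $\hat\beta$ equals the positive constant $\beta^-$ on $\hat K_F^-$ and the positive constant $\beta^+$ on $\hat K_F^+$. For a function $\hat w$ that is smooth up to $\eta=0$ from each side, its jump is $[\![\hat w]\!]_{\hat\Gamma_{K_F}}(\xi)=\hat w^+(0,\xi)-\hat w^-(0,\xi)$, where $\hat w^\pm$ are the restrictions of $\hat w$ to $\hat K_F^\pm$. The operator $\mathscr{L}$ is the transformed Laplacian $$\mathscr{L}(\hat u)=\hat u_{\eta\eta}+J_0(\eta,\xi)\hat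 u_{\xi\xi}+J_1(\eta,\xi)\hat u_\eta+J_2(\eta,\xi)\hat u_\xi .$$ Here $J_0,J_1,J_2$ are fixed smooth real-valued functions on $\overline{\hat K_F}$ determined by the geometry (curvature and parametrization) of the interface curve; they are the same on both sides of $\eta=0$. A piecewise function $\hat u$ with $\hat u|_{\hat K_F^\pm}\in\mathbb{P}_m$ satisfies the interface conditions if: - (C1) $[\![\hat u]\!]_{\hat\Gamma_{K_F}}=0$ for all $\xi\in[\xi_0,\xi_1]$; - (C2) $[\![\hat\beta\,\hat u_\eta]\!]_{\hat\Gamma_{K_F}}=0$ for all $\xi\in[\xi_0,\xi_1]$; - (C3) for every $j=0,1,\dots,m-2$ and every $\hat v\in\mathbb{P}_{m-2-j}(\hat\Gamma_{K_F})$, $$\int_{\xi_0}^{\xi_1}\hat v(\xi)\,[\![\hat\beta\,\partial_\eta^j\mathscr{L}(\hat u)]\!]_{\hat\Gamma_{K_F}}(\xi)\,d\xi=0.$$ Condition (C3) is vacuous when $m=1$. *)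

From Stdlib Require Import Reals.
From Coquelicot Require Import Coquelicot.
Open Scope R_scope.

(* Functions of two real variables are written  f eta xi  (Frenet coordinates). *)

Definition continuous2 (f : R -> R -> R) : Prop :=
  forall x y : R, continuous (fun p : R * R => f (fst p) (snd p)) (x, y).

Definition d_eta (f : R -> R -> R) : R -> R -> R :=
  fun e x => Derive (fun t => f t x) e.
Definition d_xi (f : R -> R -> R) : R -> R -> R :=
  fun e x => Derive (fun t => f e t) x.

Fixpoint Ck (n : nat) (f : R -> R -> R) : Prop :=
  match n with
  | O => continuous2 f
  | S n' =>
      continuous2 f /\
      (forall e x, ex_derive (fun t => f t x) e) /\
      (forall e x, ex_derive (fun t => f e t) x) /\
      Ck n' (d_eta f) /\ Ck n' (d_xi f)
  end.

Definition smooth2 (f : R -> R -> R) : Prop := forall n, Ck n f.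

Definition is_poly2 (m : nat) (f : R -> R -> R) : Prop :=
  exists c : nat -> nat -> R, forall e x : R,
    f e x = sum_f_R0 (fun a => sum_f_R0 (fun b =>
              if (a + b <=? m)%nat then c a b * e ^ a * x ^ b else 0) m) m.

Definition is_poly1 (k : nat) (v : R -> R) : Prop :=
  exists c : nat -> R, forall x : R, v x = sum_f_R0 (fun a => c a * x ^ a) k.

Definition Lop (J0 J1 J2 : R -> R -> R) (u : R -> R -> R) : R -> R -> R :=
  fun e x =>
    Derive_n (fun t => u t x) 2 e + J0 e x * Derive_n (fun t => u e t) 2 x
    + J1 e x * Derive (fun t => u t x) e + J2 e x * Derive (fun t => u e t) x.

(* A piecewise function is given by its two pieces um (on eta<0) and up (on eta>0);
   the jump across eta = 0 of beta * w(u), where w(u) is a quantity computed from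
   the piece u on each side, evaluated at (0, xi). *)
Definition jump_beta (betam betap : R) (w : (R -> R -> R) -> R -> R -> R)
  (um up : R -> R -> R) (x : R) : R :=
  betap * w up 0 x - betam * w um 0 x.

Definition interface_conds (m : nat) (xi0 xi1 betam betap : R)
  (J0 J1 J2 : R -> R -> R) (um up : R -> R -> R) : Prop :=
  (forall x, xi0 <= x <= xi1 -> up 0 x - um 0 x = 0) /\
  (forall x, xi0 <= x <= xi1 ->
     jump_beta betam betap (fun u => d_eta u) um up x = 0) /\
  (* (C3), for j = 0, ..., m-2 (vacuous when m = 1) *)
  (forall j : nat, (j + 2 <= m)%nat ->
   forall v : R -> R, is_poly1 (m - 2 - j) v ->
     RInt (fun x => v x *
             jump_beta betam betap
               (fun u e x' => Derive_n (fun t => Lop J0 J1 J2 u t x') j e)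
               um up x) xi0 xi1 = 0).

(* Sign s : true = '+', false = '-'.  Given the piece on side s and the piece on
   the opposite side s', return (piece on eta<0, piece on eta>0). *)
Definition pieces (s : bool) (phis phis' : R -> R -> R) : (R -> R -> R) * (R -> R -> R) :=
  if s then (phis', phis) else (phis, phis').

From Stdlib Require Import Reals Lra Lia FunctionalExtensionality Factorial.
From Coquelicot Require Import Coquelicot.
Open Scope R_scope.

(* Write the unknown piece as phi = sum_a eta^a r_a(xi) with r_a in P_(m-a). On eta = 0,
   (C1) prescribes r_0 and (C2) prescribes r_1. The operator L is d_eta^2 plus terms that
   lower the power of eta by at most one, so on the interface
     d_eta^j L(phi) = (j+2)! r_(j+2) + (terms in r_0, ..., r_(j+1)).
   Hence (C3) of order j says that r_(j+2) minus a known continuous function is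
   L2(xi0, xi1)-orthogonal to P_(m-2-j): r_(j+2) is an orthogonal projection, which exists
   (Gram-Schmidt) and is unique (a polynomial vanishing on an interval is zero). The rows
   are thus determined one after another. *)

Lemma fun2_ext (f g : R -> R -> R) : (forall t x, f t x = g t x) -> f = g.
Proof.
  intros H. apply functional_extensionality; intro t.
  apply functional_extensionality; intro x. apply H.
Qed.

(** * Calculus in the eta variable *)

Definition d_eta_n (n : nat) (f : R -> R -> R) : R -> R -> R := Nat.iter n d_eta f.

Fixpoint eta_Cn (n : nat) (f : R -> R -> R) : Prop :=
  match n with
  | O => continuous2 f
  | S n' => continuous2 f /\ (forall e x, ex_derive (fun t => f t x) e) /\
            eta_Cn n' (d_eta f)
  end.

Definition eta_smooth (f : R -> R -> R) : Prop := forall n, eta_Cn n f.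

Lemma eta_Cn_S_le n f : eta_Cn (S n) f -> eta_Cn n f.
Proof.
  revert f; induction n as [|n IH]; intros f H; simpl in *; [tauto|].
  split; [tauto|]. split; [tauto|]. apply IH; tauto.
Qed.

Lemma Ck_eta_Cn n f : Ck n f -> eta_Cn n f.
Proof.
  revert f; induction n as [|n IH]; intros f H; simpl in *; [exact H|].
  split; [tauto|]. split; [tauto|]. apply IH; tauto.
Qed.

Lemma smooth2_eta_smooth f : smooth2 f -> eta_smooth f.
Proof. intros H n. apply Ck_eta_Cn, H. Qed.

Lemma eta_smooth_continuous2 f : eta_smooth f -> continuous2 f.
Proof. intros H. exact (H O). Qed.

Lemma eta_smooth_ex_derive f : eta_smooth f -> forall e x, ex_derive (fun t => f t x) e.
Proof. intros H. exact (proj1 (proj2 (H 1%nat))). Qed.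

Lemma eta_smooth_d_eta f : eta_smooth f -> eta_smooth (d_eta f).
Proof. intros H n. exact (proj2 (proj2 (H (S n)))). Qed.

Lemma eta_smooth_d_eta_n n f : eta_smooth f -> eta_smooth (d_eta_n n f).
Proof. induction n; intros H; [exact H|]. apply eta_smooth_d_eta, IHn, H. Qed.

Lemma continuous2_plus f g :
  continuous2 f -> continuous2 g -> continuous2 (fun t x => f t x + g t x).
Proof.
  intros Hf Hg x y.
  apply (continuous_plus (fun p : R * R => f (fst p) (snd p))
                         (fun p : R * R => g (fst p) (snd p))); auto.
Qed.

Lemma continuous2_mult f g :
  continuous2 f -> continuous2 g -> continuous2 (fun t x => f t x * g t x).
Proof.
  intros Hf Hg x y.
  apply (continuous_mult (fun p : R * R => f (fst p) (snd p))
                         (fun p : R * R => g (fst p) (snd p))); auto.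
Qed.

Lemma d_eta_plus f g :
  (forall e x, ex_derive (fun t => f t x) e) -> (forall e x, ex_derive (fun t => g t x) e) ->
  d_eta (fun t x => f t x + g t x) = fun t x => d_eta f t x + d_eta g t x.
Proof.
  intros Hf Hg. apply fun2_ext; intros t x.
  apply (Derive_plus (fun t => f t x) (fun t => g t x)); auto.
Qed.

Lemma d_eta_mult f g :
  (forall e x, ex_derive (fun t => f t x) e) -> (forall e x, ex_derive (fun t => g t x) e) ->
  d_eta (fun t x => f t x * g t x) = fun t x => d_eta f t x * g t x + f t x * d_eta g t x.
Proof.
  intros Hf Hg. apply fun2_ext; intros t x.
  apply (Derive_mult (fun t => f t x) (fun t => g t x)); auto.
Qed.

Lemma eta_Cn_plus n : forall f g, eta_Cn n f -> eta_Cn n g -> eta_Cn n (fun t x => f t x + g t x).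
Proof.
  induction n as [|n IH]; intros f g Hf Hg; simpl in *.
  - apply continuous2_plus; auto.
  - destruct Hf as [Cf [Df Hf]], Hg as [Cg [Dg Hg]].
    split; [apply continuous2_plus; auto|]. split.
    + intros e x. apply (ex_derive_plus (fun t => f t x) (fun t => g t x)); auto.
    + rewrite d_eta_plus; auto.
Qed.

Lemma eta_Cn_mult n : forall f g, eta_Cn n f -> eta_Cn n g -> eta_Cn n (fun t x => f t x * g t x).
Proof.
  induction n as [|n IH]; intros f g Hf Hg; [apply continuous2_mult; auto|].
  pose proof (eta_Cn_S_le _ _ Hf) as Hf'. pose proof (eta_Cn_S_le _ _ Hg) as Hg'.
  simpl in *. destruct Hf as [Cf [Df Hf]], Hg as [Cg [Dg Hg]].
  split; [apply continuous2_mult; auto|]. split.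
  - intros e x. apply (ex_derive_mult (fun t => f t x) (fun t => g t x)); auto.
  - rewrite d_eta_mult; auto. apply eta_Cn_plus; apply IH; auto.
Qed.

Lemma eta_smooth_plus f g : eta_smooth f -> eta_smooth g -> eta_smooth (fun t x => f t x + g t x).
Proof. intros Hf Hg n; apply eta_Cn_plus; auto. Qed.

Lemma eta_smooth_mult f g : eta_smooth f -> eta_smooth g -> eta_smooth (fun t x => f t x * g t x).
Proof. intros Hf Hg n; apply eta_Cn_mult; auto. Qed.

Lemma eta_smooth_sum (F : nat -> R -> R -> R) N :
  (forall i, eta_smooth (F i)) -> eta_smooth (fun t x => sum_f_R0 (fun i => F i t x) N).
Proof.
  intros H; induction N; simpl; [apply H|].
  apply (eta_smooth_plus (fun t x => sum_f_R0 (fun i => F i t x) N) (F (S N))); auto.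
Qed.

Lemma eta_smooth_xi (g : R -> R) : (forall y, continuous g y) -> eta_smooth (fun _ y => g y).
Proof.
  intros Hg n. revert g Hg; induction n as [|n IH]; intros g Hg.
  all: assert (C : continuous2 (fun _ y => g y))
         by (intros x y; apply (continuous_comp (fun p : R * R => snd p) g);
             [apply continuous_snd|apply Hg]).
  - exact C.
  - split; [exact C|]. split; [intros; apply ex_derive_const|].
    replace (d_eta (fun _ y => g y)) with (fun (_ y : R) => (fun _ : R => 0) y).
    + apply IH. intros; apply continuous_const.
    + apply fun2_ext; intros t x. unfold d_eta. now rewrite Derive_const.
Qed.

Lemma eta_smooth_const (k : R) : eta_smooth (fun _ _ => k).
Proof. apply (eta_smooth_xi (fun _ => k)). intros; apply continuous_const. Qed.

Lemma eta_smooth_eta : eta_smooth (fun t (_ : R) => t).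
Proof.
  intros [|n]; simpl; [intros x y; apply continuous_fst|].
  split; [intros x y; apply continuous_fst|]. split; [intros; apply ex_derive_id|].
  replace (d_eta (fun t _ => t)) with (fun (_ _ : R) => 1); [apply eta_smooth_const|].
  apply fun2_ext; intros t x. unfold d_eta. now rewrite Derive_id.
Qed.

Definition eta_pow (a : nat) : R -> R -> R := fun t _ => t ^ a.

Lemma eta_smooth_pow a : eta_smooth (eta_pow a).
Proof.
  unfold eta_pow; induction a; simpl; [apply eta_smooth_const|].
  apply (eta_smooth_mult (fun t _ => t) (fun t _ => t ^ a)); auto. apply eta_smooth_eta.
Qed.

Lemma d_eta_n_S n f : d_eta_n (S n) f = d_eta_n n (d_eta f).
Proof. apply Nat.iter_succ_r. Qed.

Lemma d_eta_n_plus n : forall f g, eta_smooth f -> eta_smooth g ->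
  d_eta_n n (fun t x => f t x + g t x) = fun t x => d_eta_n n f t x + d_eta_n n g t x.
Proof.
  induction n as [|n IH]; intros f g Hf Hg; [reflexivity|].
  rewrite !d_eta_n_S, d_eta_plus by (apply eta_smooth_ex_derive; auto).
  apply IH; apply eta_smooth_d_eta; auto.
Qed.

Lemma d_eta_n_scal_r n f (g : R -> R) :
  d_eta_n n (fun t x => f t x * g x) = fun t x => d_eta_n n f t x * g x.
Proof.
  induction n as [|n IH]; [reflexivity|]. simpl. rewrite IH.
  apply fun2_ext; intros t x. apply (Derive_scal_l (fun t => d_eta_n n f t x)).
Qed.

Lemma d_eta_n_scal_l n f (g : R -> R) :
  d_eta_n n (fun t x => g x * f t x) = fun t x => g x * d_eta_n n f t x.
Proof.
  induction n as [|n IH]; [reflexivity|]. simpl. rewrite IH.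
  apply fun2_ext; intros t x. apply (Derive_scal (fun t => d_eta_n n f t x)).
Qed.

Lemma d_eta_n_sum n (F : nat -> R -> R -> R) N : (forall i, eta_smooth (F i)) ->
  d_eta_n n (fun t x => sum_f_R0 (fun i => F i t x) N)
  = fun t x => sum_f_R0 (fun i => d_eta_n n (F i) t x) N.
Proof.
  intros H; induction N; [reflexivity|]. simpl.
  rewrite (d_eta_n_plus n (fun t x => sum_f_R0 (fun i => F i t x) N) (F (S N))), IHN; auto.
  apply eta_smooth_sum; auto.
Qed.

Lemma Derive_n_d_eta_n f x n e : Derive_n (fun t => f t x) n e = d_eta_n n f e x.
Proof.
  revert e; induction n as [|n IH]; intro e; [reflexivity|]. simpl.
  replace (Derive_n (fun t => f t x) n) with (fun e => d_eta_n n f e x); [reflexivity|].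
  apply functional_extensionality; intro; auto.
Qed.

Definition eta_flat (k : nat) (f : R -> R -> R) : Prop :=
  forall i x, (i < k)%nat -> d_eta_n i f 0 x = 0.

Lemma eta_flat_le k k' f : (k' <= k)%nat -> eta_flat k f -> eta_flat k' f.
Proof. intros H Hf i x Hi. apply Hf. lia. Qed.

Lemma eta_flat_S k f : (forall x, f 0 x = 0) -> eta_flat k (d_eta f) -> eta_flat (S k) f.
Proof. intros H0 Hf [|i] x Hi; [apply H0|]. rewrite d_eta_n_S. apply Hf. lia. Qed.

Lemma eta_flat_d_eta k f : eta_flat (S k) f -> eta_flat k (d_eta f).
Proof. intros Hf i x Hi. rewrite <- d_eta_n_S. apply Hf. lia. Qed.

Lemma eta_flat_plus k f g : eta_smooth f -> eta_smooth g ->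
  eta_flat k f -> eta_flat k g -> eta_flat k (fun t x => f t x + g t x).
Proof. intros Hf Hg Ff Fg i x Hi. rewrite d_eta_n_plus, Ff, Fg by auto. ring. Qed.

Lemma eta_flat_mult_l k : forall f g, eta_smooth f -> eta_smooth g ->
  eta_flat k f -> eta_flat k (fun t x => f t x * g t x).
Proof.
  induction k as [|k IH]; intros f g Hf Hg Ff; [intros i x Hi; lia|].
  assert (Hf' := eta_smooth_d_eta f Hf). assert (Hg' := eta_smooth_d_eta g Hg).
  apply eta_flat_S.
  - intros x. change (f 0 x) with (d_eta_n 0 f 0 x). rewrite Ff by lia. ring.
  - rewrite d_eta_mult by (apply eta_smooth_ex_derive; auto).
    apply eta_flat_plus; try (apply eta_smooth_mult; auto).
    + apply IH; auto. apply eta_flat_d_eta; auto.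
    + apply IH; auto. apply (eta_flat_le (S k)); auto.
Qed.

Lemma eta_flat_mult_r k f g : eta_smooth f -> eta_smooth g ->
  eta_flat k g -> eta_flat k (fun t x => f t x * g t x).
Proof.
  intros Hf Hg Fg.
  replace (fun t x => f t x * g t x) with (fun t x => g t x * f t x)
    by (apply fun2_ext; intros; ring).
  apply eta_flat_mult_l; auto.
Qed.

Lemma d_eta_pow k : d_eta (eta_pow (S k)) = fun t _ => INR (S k) * t ^ k.
Proof.
  apply fun2_ext; intros t x. apply is_derive_unique.
  replace (INR (S k) * t ^ k) with (INR (S k) * 1 * t ^ pred (S k)) by (simpl; ring).
  apply (is_derive_pow (fun t => t)), (is_derive_id (K := R_AbsRing)).
Qed.

Lemma eta_flat_pow k : eta_flat k (eta_pow k).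
Proof.
  induction k as [|k IH]; [intros i x Hi; lia|].
  apply eta_flat_S; [intros; simpl; ring|]. rewrite d_eta_pow.
  apply (eta_flat_mult_r k (fun _ _ => INR (S k)) (eta_pow k)); auto.
  apply eta_smooth_const. apply eta_smooth_pow.
Qed.

Lemma d_eta_n_pow_diag k x : d_eta_n k (eta_pow k) 0 x = INR (fact k).
Proof.
  induction k as [|k IH]; [reflexivity|].
  rewrite d_eta_n_S, d_eta_pow.
  change (d_eta_n k (fun t x => (fun _ : R => INR (S k)) x * eta_pow k t x) 0 x
          = INR (fact (S k))).
  rewrite d_eta_n_scal_l, IH.
  change (fact (S k)) with (S k * fact k)%nat. now rewrite mult_INR.
Qed.

Lemma d_eta_pow_1_0 a x : d_eta (eta_pow a) 0 x = if (a =? 1)%nat then 1 else 0.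
Proof.
  destruct a as [|a].
  - unfold d_eta, eta_pow. simpl. apply Derive_const.
  - rewrite d_eta_pow. destruct a; simpl; ring.
Qed.

(* p is put in the eta slot, so that the eta calculus applies to it. *)
Definition smooth1 (p : R -> R) : Prop := eta_smooth (fun y (_ : R) => p y).

Lemma continuous2_slice_xi f e x : continuous2 f -> continuous (fun y => f e y) x.
Proof.
  intros H. apply (continuous_comp_2 (fun _ => e) (fun y => y) f);
    [apply continuous_const|apply continuous_id|apply H].
Qed.

Lemma continuous2_slice_eta f e x : continuous2 f -> continuous (fun y => f y e) x.
Proof.
  intros H. apply (continuous_comp_2 (fun y => y) (fun _ => e) f);
    [apply continuous_id|apply continuous_const|apply H].
Qed.

Lemma d_eta_n_smooth1 p n y t : d_eta_n n (fun y (_ : R) => p y) y t = Derive_n p n y.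
Proof. now rewrite <- (Derive_n_d_eta_n (fun y (_ : R) => p y) t n y). Qed.

Lemma smooth1_Derive_n_continuous p n x : smooth1 p -> continuous (Derive_n p n) x.
Proof.
  intros H. eapply continuous_ext; [intros y; apply (d_eta_n_smooth1 p n y 0)|].
  apply continuous2_slice_eta, eta_smooth_continuous2, eta_smooth_d_eta_n, H.
Qed.

Lemma eta_smooth_xi_Derive_n (n : nat) p : smooth1 p ->
  eta_smooth (fun (_ : R) y => Derive_n p n y).
Proof. intros H. apply eta_smooth_xi. intros; apply smooth1_Derive_n_continuous, H. Qed.

Lemma smooth1_zero : smooth1 (fun _ => 0).
Proof. exact (eta_smooth_const 0). Qed.

Lemma smooth1_sum (F : nat -> R -> R) N :
  (forall i, smooth1 (F i)) -> smooth1 (fun y => sum_f_R0 (fun i => F i y) N).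
Proof. intros H. apply (eta_smooth_sum (fun i y (_ : R) => F i y)), H. Qed.

Lemma smooth1_monomial (k : R) b : smooth1 (fun y => k * y ^ b).
Proof.
  apply (eta_smooth_mult (fun _ _ => k) (eta_pow b)); [apply eta_smooth_const|apply eta_smooth_pow].
Qed.

(** * The operator L on eta-expansions *)

(* Expansion of a function in powers of eta with rows r_a(xi); every element of P_m
   is such an expansion, with r_a in P_(m-a). *)
Definition eta_series (m : nat) (r : nat -> R -> R) : R -> R -> R :=
  fun t y => sum_f_R0 (fun a => t ^ a * r a y) m.

Definition rows_smooth (r : nat -> R -> R) : Prop := forall a, smooth1 (r a).

Lemma eta_series_0 m r x : eta_series m r 0 x = r 0%nat x.
Proof. unfold eta_series. induction m as [|m IH]; simpl; [ring|]. rewrite IH. ring. Qed.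

Lemma d_eta_n_eta_series n m r : rows_smooth r ->
  d_eta_n n (eta_series m r)
  = fun t x => sum_f_R0 (fun a => d_eta_n n (eta_pow a) t x * r a x) m.
Proof.
  intros Hr. unfold eta_series.
  rewrite (d_eta_n_sum n (fun a t y => eta_pow a t y * r a y)).
  - apply fun2_ext; intros t x. apply sum_eq; intros a _.
    now rewrite (d_eta_n_scal_r n (eta_pow a) (r a)).
  - intros a. apply (eta_smooth_mult (eta_pow a) (fun _ y => Derive_n (r a) 0 y)).
    + apply eta_smooth_pow.
    + apply eta_smooth_xi_Derive_n, Hr.
Qed.

Lemma d_eta_eta_series_0 m r x : (1 <= m)%nat -> rows_smooth r ->
  d_eta (eta_series m r) 0 x = r 1%nat x.
Proof.
  intros Hm Hr. change (d_eta (eta_series m r)) with (d_eta_n 1 (eta_series m r)).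
  rewrite d_eta_n_eta_series by exact Hr. simpl d_eta_n.
  induction m as [|m IH]; [lia|]. destruct m as [|m].
  - simpl. rewrite !d_eta_pow_1_0. simpl. ring.
  - rewrite tech5, IH, d_eta_pow_1_0 by lia. simpl. ring.
Qed.

Section Operator.

Variables J0 J1 J2 : R -> R -> R.
Hypotheses (HJ0 : eta_smooth J0) (HJ1 : eta_smooth J1) (HJ2 : eta_smooth J2).

(* L(eta^a p(xi)) = (eta^a)'' p + Lop_lower a p *)
Definition Lop_lower (a : nat) (p : R -> R) : R -> R -> R :=
  fun t x => J0 t x * (t ^ a * Derive_n p 2 x)
             + J1 t x * (d_eta_n 1 (eta_pow a) t x * p x)
             + J2 t x * (t ^ a * Derive_n p 1 x).

Definition Lop_monomial (a : nat) (p : R -> R) : R -> R -> R :=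
  fun t x => d_eta_n 2 (eta_pow a) t x * p x + Lop_lower a p t x.

Lemma eta_smooth_mult3 J F P : eta_smooth J -> eta_smooth F -> eta_smooth P ->
  eta_smooth (fun t x => J t x * (F t x * P t x)).
Proof. intros; apply eta_smooth_mult; [|apply eta_smooth_mult]; assumption. Qed.

Lemma eta_flat_mult3 k J F P : eta_smooth J -> eta_smooth F -> eta_smooth P ->
  eta_flat k F -> eta_flat k (fun t x => J t x * (F t x * P t x)).
Proof.
  intros; apply eta_flat_mult_r; [|apply eta_smooth_mult|apply eta_flat_mult_l]; assumption.
Qed.

Lemma eta_smooth_Lop_lower a p : smooth1 p -> eta_smooth (Lop_lower a p).
Proof.
  intros Hp. pose proof (eta_smooth_pow a). pose proof (eta_smooth_xi_Derive_n 0 p Hp).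
  repeat apply eta_smooth_plus;
    apply eta_smooth_mult3; auto using eta_smooth_xi_Derive_n, eta_smooth_d_eta_n.
Qed.

Lemma eta_smooth_Lop_principal a p : smooth1 p ->
  eta_smooth (fun t x => d_eta_n 2 (eta_pow a) t x * p x).
Proof.
  intros Hp. apply (eta_smooth_mult (d_eta_n 2 (eta_pow a)) (fun _ x => Derive_n p 0 x)).
  - apply eta_smooth_d_eta_n, eta_smooth_pow.
  - apply eta_smooth_xi_Derive_n, Hp.
Qed.

Lemma eta_smooth_Lop_monomial a p : smooth1 p -> eta_smooth (Lop_monomial a p).
Proof.
  intros Hp. apply (eta_smooth_plus (fun t x => d_eta_n 2 (eta_pow a) t x * p x)).
  - apply eta_smooth_Lop_principal, Hp.
  - apply eta_smooth_Lop_lower, Hp.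
Qed.

(* The lower-order part of L loses at most one power of eta. *)
Lemma eta_flat_Lop_lower a p k : smooth1 p -> (k + 1 <= a)%nat -> eta_flat k (Lop_lower a p).
Proof.
  intros Hp Ha. pose proof (eta_smooth_pow a). pose proof (eta_smooth_xi_Derive_n 0 p Hp).
  assert (eta_flat k (eta_pow a)) by (apply (eta_flat_le a); [lia|apply eta_flat_pow]).
  assert (eta_flat k (d_eta_n 1 (eta_pow a))).
  { destruct a as [|a]; [lia|]. apply (eta_flat_le a); [lia|].
    apply eta_flat_d_eta, eta_flat_pow. }
  repeat apply eta_flat_plus; repeat apply eta_smooth_plus;
    first [apply eta_smooth_mult3 | apply eta_flat_mult3];
    auto using eta_smooth_xi_Derive_n, eta_smooth_d_eta_n.
Qed.

Lemma d_eta_n_Lop_monomial_high a p j x : smooth1 p -> (j + 3 <= a)%nat ->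
  d_eta_n j (Lop_monomial a p) 0 x = 0.
Proof.
  intros Hp Ha. enough (F : eta_flat (S j) (Lop_monomial a p)) by (apply F; lia).
  apply eta_flat_plus.
  - apply eta_smooth_Lop_principal, Hp.
  - apply eta_smooth_Lop_lower, Hp.
  - apply (eta_flat_mult_l _ _ (fun _ x => Derive_n p 0 x)).
    + apply eta_smooth_d_eta_n, eta_smooth_pow.
    + apply eta_smooth_xi_Derive_n, Hp.
    + destruct a as [|[|a]]; [lia|lia|]. apply (eta_flat_le a); [lia|].
      apply eta_flat_d_eta, eta_flat_d_eta, eta_flat_pow.
  - apply eta_flat_Lop_lower; [exact Hp|lia].
Qed.

Lemma d_eta_n_Lop_monomial_diag p j x : smooth1 p ->
  d_eta_n j (Lop_monomial (j + 2) p) 0 x = INR (fact (j + 2)) * p x.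
Proof.
  intros Hp. unfold Lop_monomial.
  rewrite d_eta_n_plus by (apply eta_smooth_Lop_principal || apply eta_smooth_Lop_lower; exact Hp).
  rewrite (eta_flat_Lop_lower (j + 2) p (S j)) by (exact Hp || lia).
  rewrite (d_eta_n_scal_r j (d_eta_n 2 (eta_pow (j + 2))) p).
  replace (d_eta_n j (d_eta_n 2 (eta_pow (j + 2)))) with (d_eta_n (j + 2) (eta_pow (j + 2)))
    by (unfold d_eta_n; apply Nat.iter_add).
  rewrite d_eta_n_pow_diag. ring.
Qed.

Lemma Lop_eta_series m r : rows_smooth r ->
  Lop J0 J1 J2 (eta_series m r) = fun t x => sum_f_R0 (fun a => Lop_monomial a (r a) t x) m.
Proof.
  intros Hr. apply fun2_ext; intros e x. unfold Lop.
  rewrite (Derive_n_d_eta_n (eta_series m r) x 2 e).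
  change (Derive (fun t => eta_series m r t x) e) with (d_eta_n 1 (eta_series m r) e x).
  rewrite !d_eta_n_eta_series by exact Hr.
  assert (Dxi : forall n, Derive_n (fun t => eta_series m r e t) n x
                          = sum_f_R0 (fun a => e ^ a * Derive_n (r a) n x) m).
  { intros n. rewrite (Derive_n_d_eta_n (fun y t => eta_series m r t y) e n x).
    unfold eta_series.
    rewrite (d_eta_n_sum n (fun a y t => t ^ a * Derive_n (r a) 0 y)).
    - apply sum_eq; intros a _.
      rewrite (d_eta_n_scal_l n (fun y _ => Derive_n (r a) 0 y) (fun t => t ^ a)).
      now rewrite d_eta_n_smooth1.
    - intros a. apply (eta_smooth_mult (fun _ t => t ^ a) (fun y _ => Derive_n (r a) 0 y)).
      + apply eta_smooth_xi. intros y.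
        apply (continuous2_slice_eta (eta_pow a) 0 y), eta_smooth_continuous2, eta_smooth_pow.
      + apply Hr. }
  change (Derive (fun t => eta_series m r e t) x)
    with (Derive_n (fun t => eta_series m r e t) 1 x).
  rewrite !Dxi. unfold Lop_monomial, Lop_lower.
  rewrite !scal_sum, <- !sum_plus. apply sum_eq; intros a _. unfold eta_pow. ring.
Qed.

Definition Lop_trace (m j : nat) (r : nat -> R -> R) (x : R) : R :=
  sum_f_R0 (fun a => d_eta_n j (Lop_monomial a (r a)) 0 x) m.

Lemma Derive_n_Lop_eta_series m j r x : rows_smooth r ->
  Derive_n (fun t => Lop J0 J1 J2 (eta_series m r) t x) j 0 = Lop_trace m j r x.
Proof.
  intros Hr. rewrite Derive_n_d_eta_n, Lop_eta_series, d_eta_n_sum by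
    (exact Hr || (intros a; apply eta_smooth_Lop_monomial, Hr)).
  reflexivity.
Qed.

Lemma Lop_trace_continuous m j r x : rows_smooth r -> continuous (Lop_trace m j r) x.
Proof.
  intros Hr. unfold Lop_trace. induction m as [|m IH]; simpl.
  all: assert (C : forall a, continuous (fun x => d_eta_n j (Lop_monomial a (r a)) 0 x) x)
         by (intros a; apply continuous2_slice_xi, eta_smooth_continuous2,
             eta_smooth_d_eta_n, eta_smooth_Lop_monomial, Hr).
  - apply C.
  - apply (continuous_plus (fun x => sum_f_R0 (fun a => d_eta_n j (Lop_monomial a (r a)) 0 x) m));
      [exact IH|apply C].
Qed.

Lemma Lop_trace_local m j r r' x : rows_smooth r -> rows_smooth r' ->
  (forall a, (a <= j + 2)%nat -> r a = r' a) -> Lop_trace m j r x = Lop_trace m j r' x.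
Proof.
  intros Hr Hr' E. unfold Lop_trace. apply sum_eq; intros a _.
  destruct (Nat.le_gt_cases a (j + 2)) as [Ha|Ha].
  - now rewrite E.
  - rewrite !d_eta_n_Lop_monomial_high by (auto; lia). reflexivity.
Qed.

Definition drop_row (k : nat) (r : nat -> R -> R) : nat -> R -> R :=
  fun a => if (a =? k)%nat then (fun _ => 0) else r a.

Lemma rows_smooth_drop_row k r : rows_smooth r -> rows_smooth (drop_row k r).
Proof. intros H a. unfold drop_row. destruct (a =? k)%nat; [apply smooth1_zero|apply H]. Qed.

Lemma Lop_trace_split m j r x : rows_smooth r -> (j + 2 <= m)%nat ->
  Lop_trace m j r x = Lop_trace m j (drop_row (j + 2) r) x + INR (fact (j + 2)) * r (j + 2)%nat x.
Proof.
  intros Hr Hm. unfold Lop_trace.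
  rewrite (sum_eq _ (fun a => d_eta_n j (Lop_monomial a (drop_row (j + 2) r a)) 0 x
            + (if (a =? j + 2)%nat then INR (fact (j + 2)) * r (j + 2)%nat x else 0))).
  - rewrite sum_plus. f_equal.
    induction m as [|m IH]; [lia|]. rewrite tech5.
    destruct (Nat.eq_dec (S m) (j + 2)) as [E|E].
    + rewrite <- E, Nat.eqb_refl, (sum_eq _ (fun _ => 0)), sum_cte by
        (intros i Hi; destruct (Nat.eqb_spec i (S m)); [lia|reflexivity]). ring.
    + rewrite IH by lia. destruct (Nat.eqb_spec (S m) (j + 2)); [lia|ring].
  - intros a _. unfold drop_row. destruct (Nat.eqb_spec a (j + 2)) as [->|].
    + rewrite !d_eta_n_Lop_monomial_diag by (apply Hr || apply smooth1_zero). ring.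
    + ring.
Qed.

End Operator.

(** * L2 projections onto polynomials in xi *)

Definition continuous_everywhere (f : R -> R) : Prop := forall x, continuous f x.

Lemma continuous_everywhere_plus f g : continuous_everywhere f -> continuous_everywhere g ->
  continuous_everywhere (fun x => f x + g x).
Proof. intros Hf Hg x. apply (continuous_plus f g); auto. Qed.

Lemma continuous_everywhere_mult f g : continuous_everywhere f -> continuous_everywhere g ->
  continuous_everywhere (fun x => f x * g x).
Proof. intros Hf Hg x. apply (continuous_mult f g); auto. Qed.

Lemma continuous_everywhere_const k : continuous_everywhere (fun _ => k).
Proof. intros x; apply continuous_const. Qed.

Lemma continuous_everywhere_scal k f : continuous_everywhere f ->
  continuous_everywhere (fun x => k * f x).
Proof. intros; apply continuous_everywhere_mult; auto; apply continuous_everywhere_const. Qed.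

Lemma continuous_everywhere_minus f g : continuous_everywhere f -> continuous_everywhere g ->
  continuous_everywhere (fun x => f x - g x).
Proof.
  intros Hf Hg x. apply (continuous_plus f (fun x => - g x)); [apply Hf|].
  apply (continuous_ext (fun x => -1 * g x)); [intros y; simpl; ring|].
  apply continuous_everywhere_scal, Hg.
Qed.

Lemma continuous_everywhere_pow k : continuous_everywhere (fun x => x ^ k).
Proof.
  induction k as [|k IH]; simpl; [apply continuous_everywhere_const|].
  apply (continuous_everywhere_mult (fun x => x)); [intros x; apply continuous_id|exact IH].
Qed.

Ltac solve_continuous :=
  repeat first [ assumption | apply continuous_everywhere_const | apply continuous_everywhere_pow
               | apply continuous_everywhere_minus | apply continuous_everywhere_plus
               | apply continuous_everywhere_scal | apply continuous_everywhere_mult ].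

Lemma ex_RInt_continuous_everywhere f a b : continuous_everywhere f -> ex_RInt f a b.
Proof. intros H. apply (ex_RInt_continuous (V := R_CompleteNormedModule)). intros; apply H. Qed.

Lemma RInt_plus_continuous f g a b : continuous_everywhere f -> continuous_everywhere g ->
  RInt (fun x => f x + g x) a b = RInt f a b + RInt g a b.
Proof. intros Hf Hg. apply (RInt_plus f g); apply ex_RInt_continuous_everywhere; auto. Qed.

Lemma RInt_scal_continuous k f a b : continuous_everywhere f ->
  RInt (fun x => k * f x) a b = k * RInt f a b.
Proof. intros Hf. apply (RInt_scal f a b k), ex_RInt_continuous_everywhere, Hf. Qed.

Lemma RInt_minus_continuous f g a b : continuous_everywhere f -> continuous_everywhere g ->
  RInt (fun x => f x - g x) a b = RInt f a b - RInt g a b.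
Proof. intros Hf Hg. apply (RInt_minus f g); apply ex_RInt_continuous_everywhere; auto. Qed.

Lemma RInt_ext_R (f g : R -> R) a b : (forall x, f x = g x) -> RInt f a b = RInt g a b.
Proof. intros H. apply RInt_ext. intros x _. apply H. Qed.

Lemma is_derive_locally_zero p a b x l : (forall y, a < y < b -> p y = 0) -> a < x < b ->
  is_derive p x l -> l = 0.
Proof.
  intros H Hx D.
  assert (L : locally x (fun t => p t = (fun _ => 0) t)).
  { apply (filter_imp (fun t => a < t /\ t < b)); [intros t Ht; apply H; auto|].
    apply (open_and _ _ (open_gt a) (open_lt b)); auto. }
  pose proof (is_derive_unique _ _ _ (is_derive_ext_loc _ _ _ _ L D)) as E.
  now rewrite Derive_const in E.
Qed.

Lemma RInt_sqr_eq_0 p a b : a < b -> continuous_everywhere p ->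
  RInt (fun x => p x * p x) a b = 0 -> forall x, a < x < b -> p x = 0.
Proof.
  intros Hab Hp H0 x Hx.
  assert (Cpp : continuous_everywhere (fun x => p x * p x)) by solve_continuous.
  set (F := fun y => RInt (fun x => p x * p x) a y).
  assert (Fz : forall y, a < y < b -> F y = 0).
  { intros y Hy.
    assert (0 <= F y) by (apply RInt_ge_0; [lra|apply ex_RInt_continuous_everywhere, Cpp|
                                           intros; apply Rle_0_sqr]).
    assert (0 <= RInt (fun x => p x * p x) y b)
      by (apply RInt_ge_0; [lra|apply ex_RInt_continuous_everywhere, Cpp|intros; apply Rle_0_sqr]).
    pose proof (RInt_Chasles (fun x => p x * p x) a y b
                  (ex_RInt_continuous_everywhere _ _ _ Cpp)
                  (ex_RInt_continuous_everywhere _ _ _ Cpp)) as Ch.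
    unfold plus in Ch; simpl in Ch. unfold F in *. lra. }
  assert (D : is_derive F x (p x * p x)).
  { apply (is_derive_RInt (fun x => p x * p x) F a x); [|apply Cpp].
    apply filter_forall. intros y. apply (RInt_correct (V := R_CompleteNormedModule)).
    apply ex_RInt_continuous_everywhere, Cpp. }
  pose proof (is_derive_locally_zero F a b x _ Fz Hx D). nra.
Qed.

Lemma is_derive_poly k (c : nat -> R) x :
  is_derive (fun x => sum_f_R0 (fun i => c i * x ^ i) k) x
            (sum_f_R0 (fun i => c i * (INR i * x ^ pred i)) k).
Proof.
  induction k as [|k IH].
  - simpl. apply (is_derive_ext (fun _ => c 0%nat)); [intros; simpl; ring|].
    replace (c 0%nat * (0 * 1)) with (@zero R_NormedModule) by (unfold zero; simpl; ring).
    apply is_derive_const.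
  - rewrite tech5.
    apply (is_derive_plus (fun x => sum_f_R0 (fun i => c i * x ^ i) k)
                          (fun x => c (S k) * x ^ S k));
      [exact IH|].
    apply is_derive_scal.
    replace (INR (S k) * x ^ pred (S k)) with (INR (S k) * 1 * x ^ pred (S k)) by ring.
    apply (is_derive_pow (fun t => t)), (is_derive_id (K := R_AbsRing)).
Qed.

Lemma poly_coeffs_eq_0 k : forall (c : nat -> R) a b, a < b ->
  (forall x, a < x < b -> sum_f_R0 (fun i => c i * x ^ i) k = 0) ->
  forall i, (i <= k)%nat -> c i = 0.
Proof.
  induction k as [|k IH]; intros c a b Hab H i Hi.
  - replace i with 0%nat by lia. pose proof (H ((a + b) / 2) ltac:(lra)) as E. simpl in E. lra.
  - assert (HS : forall i, (i <= k)%nat -> c (S i) = 0).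
    { intros j Hj.
      enough (c (S j) * INR (S j) = 0) as E
        by (apply Rmult_integral in E; destruct E as [E|E]; [exact E|];
            rewrite S_INR in E; pose proof (pos_INR j); lra).
      apply (IH (fun i => c (S i) * INR (S i)) a b Hab); [|exact Hj].
      intros x Hx.
      pose proof (is_derive_locally_zero _ a b x _ H Hx (is_derive_poly (S k) c x)) as Z.
      rewrite decomp_sum in Z by lia. simpl pred in Z. rewrite <- Z.
      simpl. rewrite Rmult_0_l, Rmult_0_r, Rplus_0_l. apply sum_eq. intros; ring. }
    destruct i as [|i]; [|apply HS; lia].
    pose proof (H ((a + b) / 2) ltac:(lra)) as E.
    rewrite decomp_sum in E by lia. simpl pred in E.
    rewrite (sum_eq _ (fun _ => 0)), sum_cte in E by (intros j Hj; rewrite HS by lia; ring).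
    simpl in E. lra.
Qed.

Lemma is_poly1_eq_0 k p a b : a < b -> is_poly1 k p ->
  (forall x, a < x < b -> p x = 0) -> forall x, p x = 0.
Proof.
  intros Hab [c Hc] H x. rewrite Hc, (sum_eq _ (fun _ => 0)), sum_cte; [ring|].
  intros i Hi. rewrite (poly_coeffs_eq_0 k c a b Hab); [ring| |exact Hi].
  intros y Hy. rewrite <- Hc. auto.
Qed.

Lemma is_poly1_minus k p q : is_poly1 k p -> is_poly1 k q -> is_poly1 k (fun x => p x - q x).
Proof.
  intros [c1 H1] [c2 H2]. exists (fun i => c1 i - c2 i). intros x.
  rewrite H1, H2, <- minus_sum. apply sum_eq. intros; ring.
Qed.

Lemma is_poly1_continuous k p : is_poly1 k p -> continuous_everywhere p.
Proof.
  intros [c H] x. apply (continuous_ext (fun x => sum_f_R0 (fun i => c i * x ^ i) k));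
    [intros y; now rewrite H|].
  revert x. change (continuous_everywhere (fun x => sum_f_R0 (fun i => c i * x ^ i) k)).
  clear H. induction k as [|k IH]; cbn [sum_f_R0]; solve_continuous.
Qed.

(* Polynomials of degree < n, with a sum over i < n so that n = 0 gives {0}. *)
Fixpoint sum_lt (n : nat) (f : nat -> R) : R :=
  match n with O => 0 | S n => sum_lt n f + f n end.

Definition poly_lt (n : nat) (v : R -> R) : Prop :=
  exists c : nat -> R, forall x, v x = sum_lt n (fun i => c i * x ^ i).

Lemma sum_lt_S k f : sum_lt (S k) f = sum_f_R0 f k.
Proof. induction k as [|k IH]; simpl in *; [ring|]. now rewrite IH. Qed.

Lemma sum_lt_ext n f g : (forall i, (i < n)%nat -> f i = g i) -> sum_lt n f = sum_lt n g.
Proof.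
  induction n as [|n IH]; intros H; simpl; [reflexivity|].
  rewrite IH by (intros; apply H; lia). rewrite H by lia. reflexivity.
Qed.

Lemma sum_lt_lin n f g (k : R) : sum_lt n (fun i => f i + k * g i) = sum_lt n f + k * sum_lt n g.
Proof. induction n as [|n IH]; simpl; [ring|]. rewrite IH. ring. Qed.

Lemma poly_lt_continuous n v : poly_lt n v -> continuous_everywhere v.
Proof.
  intros [c H] x. apply (continuous_ext (fun x => sum_lt n (fun i => c i * x ^ i)));
    [intros y; now rewrite H|].
  revert x. change (continuous_everywhere (fun x => sum_lt n (fun i => c i * x ^ i))).
  clear H. induction n as [|n IH]; cbn [sum_lt]; solve_continuous.
Qed.

Lemma poly_lt_S_is_poly1 k v : poly_lt (S k) v <-> is_poly1 k v.
Proof.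
  split; intros [c H]; exists c; intros x; rewrite H; [|symmetry]; apply sum_lt_S.
Qed.

Lemma RInt_sqr_pow_sub_poly_lt n q a b : a < b -> poly_lt n q ->
  RInt (fun x => (x ^ n - q x) * (x ^ n - q x)) a b <> 0.
Proof.
  intros Hab [c Hc] H0.
  assert (Cq : continuous_everywhere q) by (apply (poly_lt_continuous n); exists c; exact Hc).
  pose proof (RInt_sqr_eq_0 (fun x => x ^ n - q x) a b Hab ltac:(solve_continuous) H0) as Z.
  enough (E : (if (n =? n)%nat then 1 else - c n) = 0) by (rewrite Nat.eqb_refl in E; lra).
  apply (poly_coeffs_eq_0 n (fun i => if (i =? n)%nat then 1 else - c i) a b Hab); [|lia].
  intros x Hx. rewrite <- sum_lt_S, <- (Z x Hx), Hc. simpl. rewrite Nat.eqb_refl.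
  rewrite (sum_lt_ext n _ (fun i => (fun _ => 0) i + (-1) * (c i * x ^ i))), sum_lt_lin.
  - replace (sum_lt n (fun _ => 0)) with 0 by (clear; induction n; simpl; [|rewrite <- IHn]; ring).
    ring.
  - intros i Hi. rewrite (proj2 (Nat.eqb_neq i n)) by lia. ring.
Qed.

Definition has_L2_projection (a b : R) (V : (R -> R) -> Prop) : Prop :=
  forall g, continuous_everywhere g ->
  exists q, V q /\ forall v, V v -> RInt (fun x => v x * (q x - g x)) a b = 0 :> R.

Lemma has_L2_projection_poly_lt_0 a b : has_L2_projection a b (poly_lt 0).
Proof.
  intros g Hg. exists (fun _ => 0). split; [exists (fun _ => 0); reflexivity|].
  intros v [c Hc]. rewrite (RInt_ext _ (fun _ => 0)), RInt_const.
  - unfold scal; simpl; unfold mult; simpl. ring.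
  - intros x _. rewrite Hc. simpl. ring.
Qed.

(* Gram-Schmidt step: correct the projection q_g onto P_(<n) by the component of g
   along r = x^n - (projection of x^n). *)
Lemma has_L2_projection_poly_lt_S a b n : a < b ->
  has_L2_projection a b (poly_lt n) -> has_L2_projection a b (poly_lt (S n)).
Proof.
  intros Hab IH g Hg.
  destruct (IH (fun x => x ^ n) (continuous_everywhere_pow n)) as [qh [[ch Hch] Ph]].
  destruct (IH g Hg) as [qg [[cg Hcg] Pg]].
  assert (Cqh : continuous_everywhere qh) by (apply (poly_lt_continuous n); exists ch; auto).
  assert (Cqg : continuous_everywhere qg) by (apply (poly_lt_continuous n); exists cg; auto).
  set (r := fun x => x ^ n - qh x).
  assert (Cr : continuous_everywhere r) by (unfold r; solve_continuous).
  set (N := RInt (fun x => r x * r x) a b).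
  assert (NN : N <> 0) by (apply RInt_sqr_pow_sub_poly_lt; [exact Hab|exists ch; exact Hch]).
  set (al := RInt (fun x => r x * g x) a b / N).
  exists (fun x => qg x + al * r x). split.
  - exists (fun i => if (i =? n)%nat then al else cg i + (- al) * ch i). intros x.
    simpl. rewrite Nat.eqb_refl.
    rewrite (sum_lt_ext n _ (fun i => cg i * x ^ i + (- al) * (ch i * x ^ i))), sum_lt_lin.
    + rewrite <- Hcg, <- Hch. unfold r. ring.
    + intros i Hi. rewrite (proj2 (Nat.eqb_neq i n)) by lia. ring.
  - intros v [cv Hcv]. simpl in Hcv.
    (* v = w + cv_n r with w in P_(<n) *)
    set (w := fun x => sum_lt n (fun i => cv i * x ^ i) + cv n * qh x).
    assert (Vw : poly_lt n w).
    { exists (fun i => cv i + cv n * ch i). intros x. unfold w. rewrite Hch, <- sum_lt_lin.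
      apply sum_lt_ext. intros; ring. }
    assert (Cw : continuous_everywhere w) by (apply (poly_lt_continuous n), Vw).
    rewrite (RInt_ext_R _ (fun x => w x * (qg x - g x) + (- al) * (w x * (qh x - x ^ n))
        + (- cv n) * (qg x * (qh x - x ^ n)) + (- cv n) * (r x * g x) + (cv n * al) * (r x * r x))).
    2:{ intros x. rewrite Hcv. unfold w, r. ring. }
    rewrite !RInt_plus_continuous, !RInt_scal_continuous by solve_continuous.
    rewrite (Pg w Vw), (Ph w Vw), (Ph qg) by (exists cg; exact Hcg).
    fold N. unfold al. field. exact NN.
Qed.

Lemma L2_projection_is_poly1 a b k g : a < b -> continuous_everywhere g ->
  exists qc : nat -> R, forall v, is_poly1 k v ->
  RInt (fun x => v x * (sum_f_R0 (fun i => qc i * x ^ i) k - g x)) a b = 0.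
Proof.
  intros Hab Hg.
  assert (P : has_L2_projection a b (poly_lt (S k))).
  { induction (S k); [apply has_L2_projection_poly_lt_0|].
    apply has_L2_projection_poly_lt_S; assumption. }
  destruct (P g Hg) as [q [[qc Hq] Pq]]. exists qc. intros v Hv.
  rewrite <- (Pq v) by (apply poly_lt_S_is_poly1, Hv).
  apply RInt_ext. intros x _. now rewrite Hq, sum_lt_S.
Qed.

(** * The interface conditions row by row *)

Definition poly2_row (m : nat) (c : nat -> nat -> R) (a : nat) (y : R) : R :=
  sum_f_R0 (fun b => if (a + b <=? m)%nat then c a b * y ^ b else 0) m.

Lemma is_poly2_eta_series m f : is_poly2 m f <-> exists c, f = eta_series m (poly2_row m c).
Proof.
  split; intros [c Hc]; exists c; [apply fun2_ext; intros e x; rewrite Hc|intros e x; subst f];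
    unfold eta_series, poly2_row; apply sum_eq; intros a _; rewrite scal_sum;
    apply sum_eq; intros b _; destruct (a + b <=? m)%nat; ring.
Qed.

Lemma rows_smooth_poly2_row m c : rows_smooth (poly2_row m c).
Proof.
  intros a. apply (smooth1_sum (fun b y => if (a + b <=? m)%nat then c a b * y ^ b else 0)).
  intros b. destruct (a + b <=? m)%nat; [apply smooth1_monomial|apply smooth1_zero].
Qed.

Lemma poly2_row_trunc m c a y : (a <= m)%nat ->
  poly2_row m c a y = sum_f_R0 (fun b => c a b * y ^ b) (m - a).
Proof.
  intros Ha. unfold poly2_row.
  assert (Trunc : forall n, (m - a <= n)%nat ->
    sum_f_R0 (fun b => if (a + b <=? m)%nat then c a b * y ^ b else 0) n
    = sum_f_R0 (fun b => c a b * y ^ b) (m - a)).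
  { induction n as [|n IH]; intros Hn.
    - replace (m - a)%nat with 0%nat by lia. simpl.
      destruct (Nat.leb_spec (a + 0) m); [reflexivity|lia].
    - destruct (Nat.eq_dec (m - a) (S n)) as [E|E].
      + rewrite E. apply sum_eq. intros b Hb. destruct (Nat.leb_spec (a + b) m); [reflexivity|lia].
      + rewrite tech5, IH by lia. destruct (Nat.leb_spec (a + S n) m); [lia|ring]. }
  apply Trunc. lia.
Qed.

Lemma poly2_row_is_poly1 m c a : (a <= m)%nat -> is_poly1 (m - a) (poly2_row m c a).
Proof. intros Ha. exists (c a). intros y. now apply poly2_row_trunc. Qed.

Lemma poly2_row_eq m c1 c2 a xi0 xi1 : xi0 < xi1 -> (a <= m)%nat ->
  (forall x, xi0 < x < xi1 -> poly2_row m c1 a x = poly2_row m c2 a x) ->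
  poly2_row m c1 a = poly2_row m c2 a.
Proof.
  intros Hxi Ha H. apply functional_extensionality; intro y.
  apply Rminus_diag_uniq.
  apply (is_poly1_eq_0 (m - a) (fun x => poly2_row m c1 a x - poly2_row m c2 a x) xi0 xi1 Hxi).
  - apply is_poly1_minus; apply poly2_row_is_poly1; exact Ha.
  - intros x Hx. rewrite H by exact Hx. ring.
Qed.

Definition set_row (N : nat) (q : nat -> R) (c : nat -> nat -> R) : nat -> nat -> R :=
  fun a b => if (a =? N)%nat then q b else c a b.

Lemma poly2_row_set_row m N q c a : (N <= m)%nat ->
  poly2_row m (set_row N q c) a
  = if (a =? N)%nat then (fun y => sum_f_R0 (fun b => q b * y ^ b) (m - N)) else poly2_row m c a.
Proof.
  intros HN. apply functional_extensionality; intro y. unfold set_row.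
  destruct (Nat.eqb_spec a N) as [->|E].
  - rewrite poly2_row_trunc by exact HN. apply sum_eq. intros b _. now rewrite Nat.eqb_refl.
  - unfold poly2_row. apply sum_eq. intros b _. now rewrite (proj2 (Nat.eqb_neq a N) E).
Qed.

Section Interface.

Variables (m : nat) (xi0 xi1 : R) (J0 J1 J2 : R -> R -> R).
Hypotheses (Hxi : xi0 < xi1) (HJ0 : eta_smooth J0) (HJ1 : eta_smooth J1) (HJ2 : eta_smooth J2).

Let trace j c := Lop_trace J0 J1 J2 m j (poly2_row m c).

Lemma trace_continuous j c : continuous_everywhere (trace j c).
Proof. intros x. apply Lop_trace_continuous, rows_smooth_poly2_row; assumption. Qed.

Definition row_conds_below (k : nat) (bm bp : R) (cm cp : nat -> nat -> R) : Prop :=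
  (forall x, xi0 <= x <= xi1 -> poly2_row m cp 0 x - poly2_row m cm 0 x = 0) /\
  (forall x, xi0 <= x <= xi1 -> bp * poly2_row m cp 1 x - bm * poly2_row m cm 1 x = 0) /\
  (forall j, (j < k)%nat -> (j + 2 <= m)%nat -> forall v, is_poly1 (m - 2 - j) v ->
     RInt (fun x => v x * (bp * trace j cp x - bm * trace j cm x)) xi0 xi1 = 0 :> R).

Lemma interface_conds_row_conds bm bp cm cp : (1 <= m)%nat ->
  interface_conds m xi0 xi1 bm bp J0 J1 J2
    (eta_series m (poly2_row m cm)) (eta_series m (poly2_row m cp))
  <-> row_conds_below m bm bp cm cp.
Proof.
  intros Hm.
  assert (Jump : forall j x,
    jump_beta bm bp (fun u e x' => Derive_n (fun t => Lop J0 J1 J2 u t x') j e)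
      (eta_series m (poly2_row m cm)) (eta_series m (poly2_row m cp)) x
    = bp * trace j cp x - bm * trace j cm x).
  { intros j x. unfold jump_beta, trace.
    rewrite !Derive_n_Lop_eta_series by (assumption || apply rows_smooth_poly2_row). reflexivity. }
  unfold interface_conds, row_conds_below, jump_beta in *. cbv beta in *.
  setoid_rewrite eta_series_0.
  setoid_rewrite (fun c x => d_eta_eta_series_0 m (poly2_row m c) x Hm (rows_smooth_poly2_row m c)).
  split; intros [C1 [C2 C3]]; (split; [exact C1|split; [exact C2|]]).
  - intros j _ Hj v Hv. etransitivity; [|exact (C3 j Hj v Hv)].
    apply RInt_ext_R. intros x. now rewrite Jump.
  - intros j Hj v Hv. etransitivity; [|exact (C3 j ltac:(lia) Hj v Hv)].
    apply RInt_ext_R. intros x. now rewrite Jump.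
Qed.

Lemma row_conds_below_swap k bm bp cm cp :
  row_conds_below k bm bp cm cp <-> row_conds_below k bp bm cp cm.
Proof.
  assert (Swap : forall b1 b2 c1 c2,
            row_conds_below k b1 b2 c1 c2 -> row_conds_below k b2 b1 c2 c1).
  { clear bm bp cm cp. intros bm bp cm cp [C1 [C2 C3]]. split; [|split].
    - intros x Hx. specialize (C1 x Hx). lra.
    - intros x Hx. specialize (C2 x Hx). lra.
    - intros j Hj Hjm v Hv.
      assert (Cv := is_poly1_continuous _ _ Hv).
      assert (Cp := trace_continuous j cp). assert (Cm := trace_continuous j cm).
      rewrite (RInt_ext_R _ (fun x => -1 * (v x * (bp * trace j cp x - bm * trace j cm x))))
        by (intros; ring).
      rewrite RInt_scal_continuous, C3 by (auto || solve_continuous).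
      ring. }
  split; apply Swap.
Qed.

Lemma row_conds_below_0 bm bp cm : 0 < bp -> exists cp, row_conds_below 0 bm bp cm cp.
Proof.
  intros Hbp.
  exists (fun a b => if (a =? 0)%nat then cm 0%nat b
                     else if (a =? 1)%nat then bm / bp * cm 1%nat b else 0).
  split; [|split].
  - intros x _. unfold poly2_row. simpl. ring.
  - intros x _. unfold poly2_row. rewrite !scal_sum, <- minus_sum.
    rewrite (sum_eq _ (fun _ => 0)), sum_cte; [ring|]. intros b _.
    change (1 =? 0)%nat with false. change (1 =? 1)%nat with true. cbv iota.
    destruct (1 + b <=? m)%nat; field; lra.
  - intros j Hj; lia.
Qed.

(* The j-th condition (C3) holds iff row j + 2 of cp is the L2-projection onto
   P_(m-2-j) of a function of the lower rows. *)
Lemma row_conds_below_S k bm bp cm cp : 0 < bp ->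
  row_conds_below k bm bp cm cp -> exists cp', row_conds_below (S k) bm bp cm cp'.
Proof.
  intros Hbp Hk.
  destruct (Nat.le_gt_cases (k + 2) m) as [Hm|Hm].
  2:{ exists cp. destruct Hk as [C1 [C2 C3]]. split; [exact C1|split; [exact C2|]].
      intros j Hj Hjm. apply C3; lia. }
  destruct Hk as [C1 [C2 C3]].
  set (N := (k + 2)%nat).
  set (r := poly2_row m cp).
  set (G := Lop_trace J0 J1 J2 m k (drop_row N r)).
  set (K := INR (fact N)).
  assert (HK : 0 < K) by apply INR_fact_lt_0.
  set (g := fun x => (bm * trace k cm x - bp * G x) / (bp * K)).
  assert (Cg : continuous_everywhere g).
  { assert (CG : continuous_everywhere G)
      by (intros x; apply Lop_trace_continuous, rows_smooth_drop_row, rows_smooth_poly2_row;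
          assumption).
    assert (Cm := trace_continuous k cm).
    intros x. apply (continuous_ext (fun x => / (bp * K) * (bm * trace k cm x - bp * G x)));
      [intros y; unfold g; simpl; field; lra|].
    revert x. solve_continuous. }
  destruct (L2_projection_is_poly1 xi0 xi1 (m - N) g Hxi Cg) as [qc Hq].
  set (q := fun y => sum_f_R0 (fun b => qc b * y ^ b) (m - N)).
  exists (set_row N qc cp).
  assert (Rows : poly2_row m (set_row N qc cp) = fun a => if (a =? N)%nat then q else r a)
    by (apply functional_extensionality; intro a; apply poly2_row_set_row; lia).
  assert (Low : forall a, (a < N)%nat -> poly2_row m (set_row N qc cp) a = r a)
    by (intros a Ha; rewrite Rows; now rewrite (proj2 (Nat.eqb_neq a N)) by lia).
  split; [|split].
  - intros x Hx. rewrite Low by lia. apply C1, Hx.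
  - intros x Hx. rewrite Low by lia. apply C2, Hx.
  - intros j Hj Hjm v Hv.
    assert (Cv := is_poly1_continuous _ _ Hv).
    destruct (Nat.eq_dec j k) as [->|Hjk].
    + assert (Drop : drop_row N (poly2_row m (set_row N qc cp)) = drop_row N r).
      { unfold drop_row. rewrite Rows. apply functional_extensionality; intro a.
        now destruct (a =? N)%nat. }
      assert (Tr : forall x, trace k (set_row N qc cp) x = G x + K * q x).
      { intros x. unfold trace.
        rewrite Lop_trace_split by (assumption || apply rows_smooth_poly2_row).
        fold N K. now rewrite Drop, Rows, Nat.eqb_refl. }
      rewrite (RInt_ext_R _ (fun x => (bp * K) * (v x * (q x - g x)))).
      * rewrite RInt_scal_continuous, Hq;
          [ring|now replace (m - N)%nat with (m - 2 - k)%nat by lia|].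
        assert (Cq : continuous_everywhere q)
          by (apply (is_poly1_continuous (m - N)); exists qc; reflexivity).
        solve_continuous.
      * intros x. rewrite Tr. unfold g. field. lra.
    + assert (Tr : forall x, trace j (set_row N qc cp) x = trace j cp x).
      { intros x. apply Lop_trace_local; try assumption; try apply rows_smooth_poly2_row.
        intros a Ha. apply Low. lia. }
      rewrite (RInt_ext_R _ (fun x => v x * (bp * trace j cp x - bm * trace j cm x)))
        by (intros x; now rewrite Tr).
      apply C3; [lia|exact Hjm|exact Hv].
Qed.

Lemma row_conds_exist bm bp cm : 0 < bp -> exists cp, row_conds_below m bm bp cm cp.
Proof.
  intros Hbp. induction m as [|k [cp Hk]] at 1.
  - apply row_conds_below_0, Hbp.
  - apply (row_conds_below_S k bm bp cm cp Hbp Hk).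
Qed.

(* Rows 0 and 1 are fixed by (C1), (C2); condition (C3) of order j then fixes row j + 2,
   since it says that (j+2)! beta^+ (row_1 - row_2) is L2-orthogonal to P_(m-2-j). *)
Lemma row_conds_unique bm bp cm c1 c2 : 0 < bp ->
  row_conds_below m bm bp cm c1 -> row_conds_below m bm bp cm c2 ->
  forall a, (a <= m)%nat -> poly2_row m c1 a = poly2_row m c2 a.
Proof.
  intros Hbp [A1 [B1 C1]] [A2 [B2 C2]] a.
  induction a as [a IH] using (well_founded_induction Wf_nat.lt_wf). intros Ha.
  apply (poly2_row_eq m c1 c2 a xi0 xi1 Hxi Ha).
  destruct a as [|[|j]]; intros x Hx.
  - specialize (A1 x ltac:(lra)). specialize (A2 x ltac:(lra)). lra.
  - specialize (B1 x ltac:(lra)). specialize (B2 x ltac:(lra)).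
    apply (Rmult_eq_reg_l bp); lra.
  - replace (S (S j)) with (j + 2)%nat in * by lia.
    set (D := fun x => poly2_row m c1 (j + 2) x - poly2_row m c2 (j + 2) x).
    assert (HD : is_poly1 (m - 2 - j) D).
    { replace (m - 2 - j)%nat with (m - (j + 2))%nat by lia.
      apply is_poly1_minus; apply poly2_row_is_poly1; exact Ha. }
    assert (CD := is_poly1_continuous _ _ HD).
    set (K := INR (fact (j + 2))).
    assert (HK : 0 < K) by apply INR_fact_lt_0.
    assert (Diff : forall x, trace j c1 x - trace j c2 x = K * D x).
    { intros y. unfold trace.
      rewrite (Lop_trace_split J0 J1 J2 HJ0 HJ1 HJ2 m j (poly2_row m c1)),
        (Lop_trace_split J0 J1 J2 HJ0 HJ1 HJ2 m j (poly2_row m c2))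
        by (apply rows_smooth_poly2_row || lia).
      rewrite (Lop_trace_local J0 J1 J2 HJ0 HJ1 HJ2 m j
                 (drop_row (j + 2) (poly2_row m c1)) (drop_row (j + 2) (poly2_row m c2)));
        try (apply rows_smooth_drop_row, rows_smooth_poly2_row).
      - unfold D, K. ring.
      - intros b Hb. unfold drop_row. destruct (Nat.eqb_spec b (j + 2)); [reflexivity|].
        apply IH; lia. }
    assert (Cc1 := trace_continuous j c1). assert (Cc2 := trace_continuous j c2).
    assert (Cm := trace_continuous j cm).
    assert (E : RInt (fun x => (bp * K) * (D x * D x)) xi0 xi1 = 0).
    { rewrite (RInt_ext_R _ (fun x => D x * (bp * trace j c1 x - bm * trace j cm x)
                                    - D x * (bp * trace j c2 x - bm * trace j cm x)))
        by (intros y; replace (bp * K * (D y * D y)) with (D y * (bp * (K * D y))) by ring;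
            rewrite <- Diff; ring).
      rewrite RInt_minus_continuous, (C1 j), (C2 j) by (lia || assumption || solve_continuous).
      apply Rminus_diag_eq. reflexivity. }
    rewrite RInt_scal_continuous in E by solve_continuous.
    apply Rmult_integral in E. destruct E as [E|E]; [nra|].
    pose proof (RInt_sqr_eq_0 D xi0 xi1 Hxi CD E x Hx). unfold D in *. lra.
Qed.
End Interface.

Lemma interface_conds_pieces m xi0 xi1 bm bp J0 J1 J2 s cs c :
  eta_smooth J0 -> eta_smooth J1 -> eta_smooth J2 -> (1 <= m)%nat ->
  interface_conds m xi0 xi1 bm bp J0 J1 J2
    (fst (pieces s (eta_series m (poly2_row m cs)) (eta_series m (poly2_row m c))))
    (snd (pieces s (eta_series m (poly2_row m cs)) (eta_series m (poly2_row m c))))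
  <-> row_conds_below m xi0 xi1 J0 J1 J2 m
        (if s then bp else bm) (if s then bm else bp) cs c.
Proof.
  intros HJ0 HJ1 HJ2 Hm. destruct s; simpl; rewrite interface_conds_row_conds by assumption;
    [apply row_conds_below_swap|reflexivity]; assumption.
Qed.

Theorem lemma2 (m : nat) (Hm : (1 <= m)%nat) (xi0 xi1 : R) (Hxi : xi0 < xi1)
  (betam betap : R) (Hbm : 0 < betam) (Hbp : 0 < betap)
  (J0 J1 J2 : R -> R -> R)
  (HJ0 : smooth2 J0) (HJ1 : smooth2 J1) (HJ2 : smooth2 J2)
  (s : bool) (phis : R -> R -> R) (Hphis : is_poly2 m phis) :
  exists! phis' : R -> R -> R,
    is_poly2 m phis' /\
    interface_conds m xi0 xi1 betam betap J0 J1 J2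
      (fst (pieces s phis phis')) (snd (pieces s phis phis')).
Proof.
  apply smooth2_eta_smooth in HJ0, HJ1, HJ2.
  destruct (proj1 (is_poly2_eta_series m phis) Hphis) as [cs ->].
  assert (Hbn : 0 < if s then betam else betap) by (destruct s; assumption).
  destruct (row_conds_exist m xi0 xi1 J0 J1 J2 Hxi HJ0 HJ1 HJ2
             (if s then betap else betam) _ cs Hbn) as [c Hc].
  exists (eta_series m (poly2_row m c)). split.
  - split; [apply is_poly2_eta_series; exists c; reflexivity|].
    apply interface_conds_pieces; assumption.
  - intros phi' [Hphi' Hi]. destruct (proj1 (is_poly2_eta_series m phi') Hphi') as [c' ->].
    apply interface_conds_pieces in Hi; [|assumption..].
    unfold eta_series. apply fun2_ext; intros t y. apply sum_eq; intros a Ha.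
    now rewrite (row_conds_unique m xi0 xi1 J0 J1 J2 Hxi HJ0 HJ1 HJ2 _ _ cs c c' Hbn Hc Hi a Ha).
Qed.
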